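(* Let $d\in\mathbb{N}$ and $(d_1,d_2)\in\mathbb{N}^2$. Then $$E_d=\{m+n\gamma^{-1}\ge0:\ m,n\in\mathbb{Z},\ |m|+|n|\le d\},\qquad E_{(d_1,d_2)}=\{m+n\gamma^{-1}\ge0:\ m,n\in\mathbb{Z},\ |m|\le d_1,\ |n|\le d_2\},$$ and $|E_d|=d^2+d+1$, $|E_{(d_1,d_2)}|=2d_1d_2+d_1+d_2+1$.
   Context: Let $f\colon\mathbb{Z}\to\mathbb{Z}$ be defined by $f(0)=f(1)=1$, $f(i+2)=f(i+1)+f(i)$ for all $i\in\mathbb{Z}$; $\gamma=(1+\sqrt5)/2$; $\mathbb{Z}[\gamma]=\mathbb{Z}\oplus\mathbb{Z}\gamma^{-1}$. For $d\in\mathbb{N}$, $E_d$ is the set of $\alpha\in\mathbb{Z}[\gamma]$ such that $\alpha=\sum_{k=1}^s\gamma^{-i_k}$ and $\sum_{k=1}^sf(i_k)\le d$ for some $s\in\mathbb{N}$ and integers $0\le i_1\le\dots\le i_s$ (empty sum $=0$). For $(d_1,d_2)\in\mathbb{N}^2$, $E_{(d_1,d_2)}$ is the set of $\alpha\in\mathbb{Z}[\gamma]$ such that $\alpha=\sum_{k=1}^s\gamma^{-i_k}$, $\sum_kf(i_k-2)\le d_1$ and $\sum_kf(i_k-1)\le d_2$ for some such $s$ and $i_1,\dots,i_s$. *)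

From Stdlib Require Import Reals ZArith List Sorting.Sorted Arith.
Import ListNotations.
Open Scope R_scope.

Definition gamma : R := (1 + sqrt 5) / 2.

Definition in_Zgamma (x : R) : Prop :=
  exists m n : Z, x = IZR m + IZR n * / gamma.

Definition sum_gpow (l : list nat) : R :=
  fold_right (fun i acc => (/ gamma) ^ i + acc) 0 l.

Definition sum_Z (g : Z -> Z) (l : list nat) : Z :=
  fold_right (fun i acc => (g (Z.of_nat i) + acc)%Z) 0%Z l.

Definition E_single (f : Z -> Z) (d : nat) (x : R) : Prop :=
  in_Zgamma x /\
  exists l : list nat, Sorted le l /\ x = sum_gpow l /\
    (sum_Z f l <= Z.of_nat d)%Z.

Definition E_pair (f : Z -> Z) (d1 d2 : nat) (x : R) : Prop :=
  in_Zgamma x /\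
  exists l : list nat, Sorted le l /\ x = sum_gpow l /\
    (sum_Z (fun i => f (i - 2)%Z) l <= Z.of_nat d1)%Z /\
    (sum_Z (fun i => f (i - 1)%Z) l <= Z.of_nat d2)%Z.

Definition card_is (P : R -> Prop) (k : nat) : Prop :=
  exists s : list R, NoDup s /\ length s = k /\ forall x, In x s <-> P x.

From Stdlib Require Import Reals ZArith List Sorting.Sorted Lia Lra Psatz.
Import ListNotations.
Open Scope R_scope.

(* Write psi = 1/gamma, so psi^2 = 1 - psi and 0 < psi < 1,
   and V m n = m + n psi.  Because psi is irrational, (m, n) |-> V m n is
   injective (a 2-adic descent on m^2 - m n - n^2 = 0).
   For a multiset l of exponents put A l = sum f(i-2), B l = sum f(i-1); the
   recurrence gives sum f(i) = A l + B l, so E_d and E_(d1,d2) are described by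
   bounds on (A l, B l).  Two facts link exponent lists with pairs (m, n):
   - every psi^i equals V a b with |a| = f(i-2), |b| = f(i-1), so a sum over l
     is some V M N with |M| <= A l and |N| <= B l (triangle inequality);
   - conversely every V m n >= 0 is a sum over some l with A l = |m| and
     B l = |n|: either (m, n) is handled by exponents 0, 1, 2 directly, or
     V m n = psi * V (m+n) m with |m+n| + |m| = |n| and we recurse.
   Hence both sets are {V m n >= 0} over a symmetric region of the lattice.
   Finally, a symmetric region whose nonzero points are split by the upper
   half-plane has 1 + #(upper points) nonnegative values, which we count. *)

Definition psi : R := / gamma.

Definition V (m n : Z) : R := IZR m + IZR n * psi.

Lemma psi_closed_form : psi = (sqrt 5 - 1) / 2.
Proof.
  assert (Hs : sqrt 5 * sqrt 5 = 5) by (apply sqrt_sqrt; lra).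
  assert (Hpos : 0 <= sqrt 5) by apply sqrt_pos.
  unfold psi, gamma. rewrite Rinv_div.
  apply (Rmult_eq_reg_r (1 + sqrt 5)); [|lra].
  unfold Rdiv. rewrite Rmult_assoc, Rinv_l by lra. nra.
Qed.

Lemma psi_sq : psi * psi = 1 - psi.
Proof.
  rewrite psi_closed_form.
  assert (Hs : sqrt 5 * sqrt 5 = 5) by (apply sqrt_sqrt; lra). nra.
Qed.

Lemma psi_bounds : 0 < psi < 1.
Proof.
  rewrite psi_closed_form.
  assert (Hs : sqrt 5 * sqrt 5 = 5) by (apply sqrt_sqrt; lra).
  assert (Hpos : 0 <= sqrt 5) by apply sqrt_pos. nra.
Qed.

Lemma V_add (a b c e : Z) : V a b + V c e = V (a + c) (b + e).
Proof. unfold V. rewrite !plus_IZR. ring. Qed.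

Lemma V_opp (a b : Z) : V (- a) (- b) = - V a b.
Proof. unfold V. rewrite !opp_IZR. ring. Qed.

Lemma V_mul_psi (m n : Z) : psi * V m n = V n (m - n).
Proof.
  unfold V. rewrite minus_IZR.
  replace (psi * (IZR m + IZR n * psi)) with (psi * IZR m + IZR n * (psi * psi)) by ring.
  rewrite psi_sq. ring.
Qed.

Lemma V_nonneg_coef (a b : Z) : 0 <= V a b -> (b < 0)%Z -> (0 < a)%Z.
Proof.
  unfold V. intros Hx Hb. apply lt_IZR. apply IZR_lt in Hb.
  pose proof psi_bounds. nra.
Qed.

(* The norm form m^2 - m n - n^2 has no nontrivial zero: a zero forces m and n
   to be even, and halving strictly decreases |m| + |n|. *)
Lemma golden_norm_zero (k : nat) (m n : Z) :
  (Z.abs m + Z.abs n <= Z.of_nat k)%Z -> (m * m - m * n - n * n = 0)%Z ->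
  m = 0%Z /\ n = 0%Z.
Proof.
  revert m n. induction k as [|k IH]; intros m n Hk Hnorm; [lia|].
  destruct (Z.Even_or_Odd m) as [[a Ha]|[a Ha]], (Z.Even_or_Odd n) as [[b Hb]|[b Hb]];
    subst m n; ring_simplify in Hnorm; try lia.
  destruct (IH a b); lia.
Qed.

Lemma V_eq_0 (m n : Z) : V m n = 0 -> m = 0%Z /\ n = 0%Z.
Proof.
  intro H0. apply (golden_norm_zero (Z.to_nat (Z.abs m + Z.abs n))); [lia|].
  apply eq_IZR. unfold V in H0.
  assert (Hm : IZR m = - IZR n * psi) by lra.
  rewrite !minus_IZR, !mult_IZR, Hm.
  replace (- IZR n * psi * (- IZR n * psi) - - IZR n * psi * IZR n - IZR n * IZR n)
    with (IZR n * IZR n * (psi * psi + psi - 1)) by ring.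
  rewrite psi_sq. ring.
Qed.

Lemma V_inj (a b c e : Z) : V a b = V c e -> a = c /\ b = e.
Proof.
  intro H. destruct (V_eq_0 (a + - c) (b + - e)); [|lia].
  rewrite <- V_add, V_opp. lra.
Qed.

Lemma shift_step (m n : Z) :
  0 <= V m n -> ~ ((0 <= m)%Z /\ ((0 <= n)%Z \/ (0 <= m + n)%Z)) ->
  0 <= V (m + n) m /\ V m n = psi * V (m + n) m /\
  (Z.abs (m + n) + Z.abs m = Z.abs n)%Z /\ m <> 0%Z.
Proof.
  intros Hx Hcase.
  assert (Hmul : V m n = psi * V (m + n) m) by (rewrite V_mul_psi; f_equal; lia).
  assert (Hy : 0 <= V (m + n) m).
  { pose proof psi_bounds. rewrite Hmul in Hx. nra. }
  split; [exact Hy|]. split; [exact Hmul|].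
  destruct (Z_lt_le_dec m 0) as [Hm|Hm].
  - pose proof (V_nonneg_coef _ _ Hy Hm). lia.
  - assert (Hn : (n < 0)%Z) by lia.
    assert (m <> 0%Z) by (intros ->; pose proof (V_nonneg_coef 0 n Hx Hn); lia). lia.
Qed.

Lemma sum_gpow_cons (i : nat) (l : list nat) : sum_gpow (i :: l) = psi ^ i + sum_gpow l.
Proof. reflexivity. Qed.

Lemma sum_Z_cons (g : Z -> Z) (i : nat) (l : list nat) :
  sum_Z g (i :: l) = (g (Z.of_nat i) + sum_Z g l)%Z.
Proof. reflexivity. Qed.

Lemma sum_gpow_app (l1 l2 : list nat) : sum_gpow (l1 ++ l2) = sum_gpow l1 + sum_gpow l2.
Proof.
  induction l1 as [|i l1 IH]; cbn [app]; [simpl; lra|]. rewrite !sum_gpow_cons, IH. lra.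
Qed.

Lemma sum_gpow_repeat (i c : nat) : sum_gpow (repeat i c) = INR c * psi ^ i.
Proof.
  induction c as [|c IH]; cbn [repeat]; [simpl; lra|]. rewrite sum_gpow_cons, IH, S_INR. lra.
Qed.

Lemma sum_gpow_shift (l : list nat) : sum_gpow (map S l) = psi * sum_gpow l.
Proof.
  induction l as [|i l IH]; cbn [map]; [simpl; lra|]. rewrite !sum_gpow_cons, IH. simpl. lra.
Qed.

Lemma sum_gpow_nonneg (l : list nat) : 0 <= sum_gpow l.
Proof.
  pose proof psi_bounds. induction l as [|i l IH]; [simpl; lra|].
  rewrite sum_gpow_cons. pose proof (pow_le psi i ltac:(lra)). lra.
Qed.

Lemma sum_Z_app (g : Z -> Z) (l1 l2 : list nat) :
  sum_Z g (l1 ++ l2) = (sum_Z g l1 + sum_Z g l2)%Z.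
Proof. induction l1 as [|i l1 IH]; cbn [app]; [reflexivity|]. rewrite !sum_Z_cons, IH. lia. Qed.

Lemma sum_Z_repeat (g : Z -> Z) (i c : nat) :
  sum_Z g (repeat i c) = (Z.of_nat c * g (Z.of_nat i))%Z.
Proof. induction c as [|c IH]; cbn [repeat]; [reflexivity|]. rewrite sum_Z_cons, IH. lia. Qed.

Lemma sum_Z_add (g h : Z -> Z) (l : list nat) :
  sum_Z (fun z => g z + h z)%Z l = (sum_Z g l + sum_Z h l)%Z.
Proof. induction l as [|i l IH]; [reflexivity|]. rewrite !sum_Z_cons, IH. lia. Qed.

Lemma sum_Z_ext (g h : Z -> Z) (l : list nat) :
  (forall z, g z = h z) -> sum_Z g l = sum_Z h l.
Proof. intro E. induction l as [|i l IH]; [reflexivity|]. rewrite !sum_Z_cons, IH, E. reflexivity. Qed.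

Lemma sum_Z_shift (g : Z -> Z) (l : list nat) :
  sum_Z g (map S l) = sum_Z (fun z => g (z + 1)%Z) l.
Proof.
  induction l as [|i l IH]; cbn [map]; [reflexivity|].
  rewrite !sum_Z_cons, IH, Nat2Z.inj_succ. reflexivity.
Qed.

Lemma sorted_two_blocks (a b c e : nat) : (a <= b)%nat -> Sorted le (repeat a c ++ repeat b e).
Proof.
  intro Hab.
  assert (Hrep : Sorted le (repeat b e)).
  { induction e as [|e IH]; simpl; constructor; [exact IH|].
    destruct e; simpl; constructor; lia. }
  induction c as [|c IH]; simpl; [exact Hrep|]. constructor; [exact IH|].
  destruct c; simpl; [destruct e|]; simpl; constructor; lia.
Qed.

Lemma sorted_shift (l : list nat) : Sorted le l -> Sorted le (map S l).
Proof.
  induction 1 as [|i l Hl IH Hhd]; simpl; constructor; [exact IH|].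
  destruct Hhd; simpl; constructor; lia.
Qed.

Section Weights.

Variable f : Z -> Z.
Hypothesis hf0 : f 0%Z = 1%Z.
Hypothesis hf1 : f 1%Z = 1%Z.
Hypothesis hfrec : forall i : Z, f (i + 2)%Z = (f (i + 1)%Z + f i)%Z.

Lemma f_rec (z : Z) : f z = (f (z - 1) + f (z - 2))%Z.
Proof.
  replace z with (z - 2 + 2)%Z at 1 by lia. rewrite hfrec.
  replace (z - 2 + 1)%Z with (z - 1)%Z by lia. reflexivity.
Qed.

Lemma f_m1 : f (-1)%Z = 0%Z.
Proof. specialize (hfrec (-1)). simpl in hfrec. lia. Qed.

Lemma f_m2 : f (-2)%Z = 1%Z.
Proof. pose proof f_m1. specialize (hfrec (-2)). simpl in hfrec. lia. Qed.

Definition weightA (l : list nat) : Z := sum_Z (fun i => f (i - 2)%Z) l.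
Definition weightB (l : list nat) : Z := sum_Z (fun i => f (i - 1)%Z) l.

Lemma weight_total (l : list nat) : sum_Z f l = (weightA l + weightB l)%Z.
Proof.
  unfold weightA, weightB. rewrite <- sum_Z_add.
  apply sum_Z_ext. intro z. rewrite (f_rec z). lia.
Qed.

Lemma weightA_shift (l : list nat) : weightA (map S l) = weightB l.
Proof.
  unfold weightA, weightB. rewrite sum_Z_shift.
  apply sum_Z_ext. intro z. f_equal. lia.
Qed.

Lemma weightB_shift (l : list nat) : weightB (map S l) = (weightA l + weightB l)%Z.
Proof.
  unfold weightA, weightB. rewrite sum_Z_shift, <- sum_Z_add.
  apply sum_Z_ext. intro z.
  replace (z + 1 - 1)%Z with z by lia. rewrite (f_rec z). lia.
Qed.

Lemma two_blocks (c e j : nat) :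
  sum_gpow (repeat 0%nat c ++ repeat j e) = INR c + INR e * psi ^ j /\
  weightA (repeat 0%nat c ++ repeat j e) = (Z.of_nat c + Z.of_nat e * f (Z.of_nat j - 2))%Z /\
  weightB (repeat 0%nat c ++ repeat j e) = (Z.of_nat e * f (Z.of_nat j - 1))%Z.
Proof.
  unfold weightA, weightB.
  rewrite sum_gpow_app, !sum_Z_app, !sum_gpow_repeat, !sum_Z_repeat.
  pose proof f_m1. pose proof f_m2. simpl. repeat split; [ring | lia | lia].
Qed.

(* The pairs representable without shifting: for m, n >= 0 take m zeros and
   n ones; for m + n >= 0 > n take m + n zeros and -n twos (psi^2 = 1 - psi). *)
Lemma direct_representation (m n : Z) :
  (0 <= m)%Z -> (0 <= n)%Z \/ (n < 0 <= m + n)%Z ->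
  exists l, Sorted le l /\ sum_gpow l = V m n /\
    weightA l = Z.abs m /\ weightB l = Z.abs n.
Proof.
  intros Hm [Hn | Hn].
  - exists (repeat 0%nat (Z.to_nat m) ++ repeat 1%nat (Z.to_nat n)).
    destruct (two_blocks (Z.to_nat m) (Z.to_nat n) 1) as [Es [Ea Eb]].
    rewrite Es, Ea, Eb, !INR_IZR_INZ, !Z2Nat.id by lia. simpl.
    rewrite hf0, f_m1. split; [apply sorted_two_blocks; lia|].
    unfold V. repeat split; [ring | lia | lia].
  - exists (repeat 0%nat (Z.to_nat (m + n)) ++ repeat 2%nat (Z.to_nat (- n))).
    destruct (two_blocks (Z.to_nat (m + n)) (Z.to_nat (- n)) 2) as [Es [Ea Eb]].
    rewrite Es, Ea, Eb, !INR_IZR_INZ, !Z2Nat.id by lia. simpl.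
    rewrite hf0, hf1. split; [apply sorted_two_blocks; lia|].
    replace (psi * (psi * 1)) with (1 - psi) by (rewrite <- psi_sq; ring).
    unfold V. rewrite plus_IZR, opp_IZR. repeat split; [ring | lia | lia].
Qed.

(* Every nonnegative V m n is a sum of powers of psi whose weights are exactly
   (|m|, |n|): by induction on |m| + |n|, either the direct case applies or
   shift_step reduces to a smaller pair, whose list is shifted by one. *)
Lemma representation (k : nat) (m n : Z) :
  (Z.abs m + Z.abs n <= Z.of_nat k)%Z -> 0 <= V m n ->
  exists l, Sorted le l /\ sum_gpow l = V m n /\
    weightA l = Z.abs m /\ weightB l = Z.abs n.
Proof.
  revert m n. induction k as [|k IH]; intros m n Hk Hx.
  - assert (m = 0%Z /\ n = 0%Z) as [-> ->] by lia.
    apply direct_representation; lia.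
  - assert (Hcase : ((0 <= m)%Z /\ ((0 <= n)%Z \/ (n < 0 <= m + n)%Z)) \/
                    ~ ((0 <= m)%Z /\ ((0 <= n)%Z \/ (0 <= m + n)%Z))) by lia.
    destruct Hcase as [[Hm Hn] | Hcase]; [apply direct_representation; assumption|].
    destruct (shift_step m n Hx Hcase) as [Hy [Hmul [Habs Hm0]]].
    destruct (IH (m + n)%Z m) as [l [Hs [Hl [Ha Hb]]]]; [lia | exact Hy |].
    exists (map S l). split; [apply sorted_shift, Hs |].
    rewrite sum_gpow_shift, Hl, weightA_shift, weightB_shift.
    split; [auto | split; lia].
Qed.

(* psi^i = V a b with |a| = f(i-2), |b| = f(i-1); the coordinates have
   opposite signs, which is what makes |a - b| = |a| + |b| in the next step. *)
Lemma psi_pow_coords (i : nat) :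
  exists a b, psi ^ i = V a b /\ Z.abs a = f (Z.of_nat i - 2) /\
    Z.abs b = f (Z.of_nat i - 1) /\ (a * b <= 0)%Z.
Proof.
  induction i as [|i [a [b [Hv [Ha [Hb Hab]]]]]].
  - exists 1%Z, 0%Z. unfold V. simpl. rewrite f_m2, f_m1. repeat split; [ring | lia].
  - exists b, (a - b)%Z. rewrite <- tech_pow_Rmult, Hv, V_mul_psi.
    rewrite Nat2Z.inj_succ, (f_rec (Z.succ (Z.of_nat i) - 1)).
    replace (Z.succ (Z.of_nat i) - 1 - 1)%Z with (Z.of_nat i - 1)%Z by lia.
    replace (Z.succ (Z.of_nat i) - 1 - 2)%Z with (Z.of_nat i - 2)%Z by lia.
    replace (Z.succ (Z.of_nat i) - 2)%Z with (Z.of_nat i - 1)%Z by lia.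
    split; [reflexivity|]. split; [lia|]. split; nia.
Qed.

(* Triangle inequality: a sum over l is some V M N with |M| <= A l, |N| <= B l. *)
Lemma sum_gpow_coords (l : list nat) :
  exists M N, sum_gpow l = V M N /\ (Z.abs M <= weightA l)%Z /\ (Z.abs N <= weightB l)%Z.
Proof.
  induction l as [|i l [M [N [Hv [HM HN]]]]].
  - exists 0%Z, 0%Z. unfold V. simpl. split; [ring|]. split; lia.
  - destruct (psi_pow_coords i) as [a [b [Hi [Ha [Hb _]]]]].
    exists (a + M)%Z, (b + N)%Z. unfold weightA, weightB in *.
    rewrite sum_gpow_cons, !sum_Z_cons, Hi, Hv, V_add. split; [reflexivity|]. split; lia.
Qed.

Lemma exponent_sums_char (Q : Z -> Z -> Prop)
  (HQ : forall a b a' b', (0 <= a' <= a)%Z -> (0 <= b' <= b)%Z -> Q a b -> Q a' b')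
  (x : R) :
  (in_Zgamma x /\ exists l, Sorted le l /\ x = sum_gpow l /\ Q (weightA l) (weightB l)) <->
  exists m n, x = V m n /\ 0 <= x /\ Q (Z.abs m) (Z.abs n).
Proof.
  split.
  - intros [_ [l [_ [Hx HQl]]]].
    destruct (sum_gpow_coords l) as [M [N [Hv [HM HN]]]].
    exists M, N. rewrite Hx. repeat split; [exact Hv | apply sum_gpow_nonneg |].
    apply (HQ _ _ _ _ (conj (Z.abs_nonneg M) HM) (conj (Z.abs_nonneg N) HN) HQl).
  - intros [m [n [Hx [Hpos HQmn]]]]. split; [exists m, n; exact Hx|].
    rewrite Hx in Hpos.
    destruct (representation (Z.to_nat (Z.abs m + Z.abs n)) m n ltac:(lia) Hpos)
      as [l [Hs [Hl [Ha Hb]]]].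
    exists l. rewrite Hl, Ha, Hb. auto.
Qed.

Lemma E_single_char (d : nat) (x : R) :
  E_single f d x <->
  exists m n, x = V m n /\ 0 <= x /\ (Z.abs m + Z.abs n <= Z.of_nat d)%Z.
Proof.
  rewrite <- (exponent_sums_char (fun a b => (a + b <= Z.of_nat d)%Z)) by (intros; lia).
  unfold E_single. setoid_rewrite weight_total. reflexivity.
Qed.

Lemma E_pair_char (d1 d2 : nat) (x : R) :
  E_pair f d1 d2 x <->
  exists m n, x = V m n /\ 0 <= x /\
    (Z.abs m <= Z.of_nat d1)%Z /\ (Z.abs n <= Z.of_nat d2)%Z.
Proof.
  apply (exponent_sums_char (fun a b => (a <= Z.of_nat d1)%Z /\ (b <= Z.of_nat d2)%Z)).
  intros a b a' b' Ha Hb [H1 H2]. lia.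
Qed.

End Weights.

Lemma card_is_ext (P Q : R -> Prop) (k : nat) :
  card_is P k -> (forall x, P x <-> Q x) -> card_is Q k.
Proof.
  intros [s [Hnd [Hlen Hmem]]] HPQ. exists s. split; [exact Hnd|]. split; [exact Hlen|].
  intro x. rewrite Hmem. apply HPQ.
Qed.

Lemma Rabs_V (m n : Z) :
  (Rabs (V m n) = V m n /\ 0 <= V m n) \/
  (Rabs (V m n) = V (- m) (- n) /\ 0 <= V (- m) (- n)).
Proof.
  rewrite V_opp. destruct (Rle_dec 0 (V m n)) as [H|H].
  - left. rewrite Rabs_right by lra. lra.
  - right. rewrite Rabs_left by lra. lra.
Qed.

(* The open upper half-plane together with the positive m-axis: it contains
   exactly one of p and -p for every lattice point p <> 0. *)
Definition upper (m n : Z) : Prop := (0 < n)%Z \/ (n = 0 /\ 0 < m)%Z.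

Section HalfCount.

Variable region : Z -> Z -> Prop.
Hypothesis region_origin : region 0%Z 0%Z.
Hypothesis region_sym : forall m n, region m n -> region (- m) (- n).
Variable half : list (Z * Z).
Hypothesis half_nodup : NoDup half.
Hypothesis half_spec : forall m n, In (m, n) half <-> region m n /\ upper m n.

Definition half_values : list R := 0 :: map (fun p => Rabs (V (fst p) (snd p))) half.

(* These values are distinct: |V p| = |V q| forces p = q or p = -q by
   injectivity of V, and p, -q cannot both lie in the upper half. *)
Lemma half_values_nodup : NoDup half_values.
Proof.
  constructor.
  - rewrite in_map_iff. intros [[m n] [Habs Hin]]. simpl in Habs.
    apply half_spec in Hin. destruct Hin as [_ Hup].
    destruct (Rabs_V m n) as [[E _]|[E _]]; rewrite E, ?V_opp in Habs;
      destruct (V_eq_0 m n) as [-> ->]; try lra; unfold upper in Hup; lia.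
  - apply NoDup_map_NoDup_ForallPairs; [|exact half_nodup].
    intros [m n] [m' n'] Hin Hin' Habs. simpl in Habs.
    apply half_spec in Hin, Hin'. destruct Hin as [_ Hup], Hin' as [_ Hup'].
    unfold upper in Hup, Hup'.
    destruct (Rabs_V m n) as [[E _]|[E _]], (Rabs_V m' n') as [[E' _]|[E' _]];
      rewrite E, E' in Habs; apply V_inj in Habs; f_equal; lia.
Qed.

(* The nonnegative values V m n over the region are exactly the half values:
   a nonzero point or its negative lies in the upper half. *)
Lemma card_nonneg_values :
  card_is (fun x => exists m n, x = V m n /\ 0 <= x /\ region m n) (S (length half)).
Proof.
  exists half_values. split; [exact half_values_nodup|].
  split; [unfold half_values; simpl; rewrite length_map; reflexivity|].
  intro x. unfold half_values. simpl. rewrite in_map_iff. split.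
  - intros [<- | [[m n] [<- Hin]]].
    + exists 0%Z, 0%Z. unfold V. simpl. split; [ring|]. split; [lra | exact region_origin].
    + apply half_spec in Hin. destruct Hin as [Hreg _]. simpl.
      destruct (Rabs_V m n) as [[E Hx]|[E Hx]]; rewrite E.
      * exists m, n. auto.
      * exists (- m)%Z, (- n)%Z. split; [reflexivity|]. split; [exact Hx | apply region_sym, Hreg].
  - intros [m [n [-> [Hx Hreg]]]].
    assert (Hcases : (m = 0 /\ n = 0)%Z \/ upper m n \/ upper (- m) (- n))
      by (unfold upper; lia).
    destruct Hcases as [[-> ->] | [Hup | Hup]]; [left | right | right].
    + unfold V. simpl. ring.
    + exists (m, n). simpl. rewrite Rabs_right by lra. split; [reflexivity|].
      apply half_spec. auto.
    + exists (- m, - n)%Z. simpl. rewrite V_opp, Rabs_Ropp, Rabs_right by lra.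
      split; [reflexivity|]. apply half_spec. auto.
Qed.

End HalfCount.

Definition zrange (a : Z) (len : nat) : list Z := map (fun k => (a + Z.of_nat k)%Z) (seq 0 len).

Lemma in_zrange (a : Z) (len : nat) (z : Z) :
  In z (zrange a len) <-> (a <= z < a + Z.of_nat len)%Z.
Proof.
  unfold zrange. rewrite in_map_iff. split.
  - intros [k [<- Hk]]. apply in_seq in Hk. lia.
  - intro Hz. exists (Z.to_nat (z - a)). rewrite in_seq. lia.
Qed.

Lemma zrange_nodup (a : Z) (len : nat) : NoDup (zrange a len).
Proof.
  apply NoDup_map_NoDup_ForallPairs; [|apply seq_NoDup].
  intros k k' _ _ E. lia.
Qed.

Lemma zrange_length (a : Z) (len : nat) : length (zrange a len) = len.
Proof. unfold zrange. rewrite length_map, length_seq. reflexivity. Qed.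

Lemma NoDup_map_inj {A B : Type} (g : A -> B) (l : list A) :
  (forall x y, g x = g y -> x = y) -> NoDup l -> NoDup (map g l).
Proof. intros Hg. apply NoDup_map_NoDup_ForallPairs. intros x y _ _. apply Hg. Qed.

Lemma NoDup_flat_map_disjoint {A B : Type} (g : A -> list B) (l : list A) :
  NoDup l -> (forall x, In x l -> NoDup (g x)) ->
  (forall x y z, In x l -> In y l -> In z (g x) -> In z (g y) -> x = y) ->
  NoDup (flat_map g l).
Proof.
  induction l as [|a l IH]; intros Hl Hg Hdisj; simpl; [constructor|].
  inversion Hl as [|? ? Ha Hl']; subst. apply NoDup_app.
  - apply Hg. left. reflexivity.
  - apply IH; [exact Hl' | intros; apply Hg; right; assumption |].
    intros x y z Hx Hy. apply Hdisj; right; assumption.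
  - intros z Hz Hz'. apply in_flat_map in Hz'. destruct Hz' as [y [Hy Hzy]].
    assert (a = y) as <- by (apply (Hdisj a y z); [left | right | |]; auto).
    contradiction.
Qed.

Section Profile.

Variable w : nat -> nat.
Variable D : nat.

Definition profile_region (m n : Z) : Prop :=
  (Z.abs n <= Z.of_nat D)%Z /\ (Z.abs m <= Z.of_nat (w (Z.to_nat (Z.abs n))))%Z.

Definition profile_row (j : nat) : list (Z * Z) :=
  map (fun m => (m, Z.of_nat j)) (zrange (- Z.of_nat (w j)) (2 * w j + 1)).

Definition profile_half : list (Z * Z) :=
  map (fun m => (m, 0%Z)) (zrange 1 (w 0)) ++ flat_map profile_row (seq 1 D).

Lemma in_profile_row (j : nat) (m n : Z) :
  In (m, n) (profile_row j) <-> n = Z.of_nat j /\ (Z.abs m <= Z.of_nat (w j))%Z.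
Proof.
  unfold profile_row. rewrite in_map_iff. split.
  - intros [m' [E Hin]]. injection E as <- <-. apply in_zrange in Hin. lia.
  - intros [-> Hm]. exists m. split; [reflexivity|]. apply in_zrange. lia.
Qed.

Lemma in_profile_half (m n : Z) :
  In (m, n) profile_half <-> profile_region m n /\ upper m n.
Proof.
  unfold profile_half, profile_region, upper.
  rewrite in_app_iff, in_flat_map, in_map_iff. split.
  - intros [[m' [E Hin]] | [j [Hj Hin]]].
    + injection E as <- <-. apply in_zrange in Hin. simpl. lia.
    + apply in_profile_row in Hin. apply in_seq in Hj. destruct Hin as [-> Hm].
      replace (Z.to_nat (Z.abs (Z.of_nat j))) with j by lia. lia.
  - intros [[Hn Hm] [Hup | [-> Hup]]].
    + right. exists (Z.to_nat n). rewrite in_seq, in_profile_row.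
      replace (Z.to_nat n) with (Z.to_nat (Z.abs n)) in * by lia. lia.
    + left. exists m. split; [reflexivity|]. apply in_zrange. simpl in Hm. lia.
Qed.

Lemma profile_half_nodup : NoDup profile_half.
Proof.
  unfold profile_half. apply NoDup_app.
  - apply NoDup_map_inj; [intros x y E; injection E; auto | apply zrange_nodup].
  - apply NoDup_flat_map_disjoint; [apply seq_NoDup | |].
    + intros j _. apply NoDup_map_inj; [intros x y E; injection E; auto | apply zrange_nodup].
    + intros j j' [m n] _ _ Hin Hin'.
      apply in_profile_row in Hin, Hin'. lia.
  - intros [m n] Hin Hin'. apply in_map_iff in Hin. destruct Hin as [m' [E _]].
    injection E as <- <-. apply in_flat_map in Hin'. destruct Hin' as [j [Hj Hin']].
    apply in_seq in Hj. apply in_profile_row in Hin'. lia.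
Qed.

Lemma profile_half_length :
  length profile_half = (w 0 + list_sum (map (fun j => 2 * w j + 1) (seq 1 D)))%nat.
Proof.
  unfold profile_half. rewrite length_app, length_map, zrange_length, length_flat_map.
  f_equal. f_equal. apply map_ext. intro j.
  unfold profile_row. rewrite length_map, zrange_length. reflexivity.
Qed.

Lemma profile_card :
  card_is (fun x => exists m n, x = V m n /\ 0 <= x /\ profile_region m n)
    (S (w 0 + list_sum (map (fun j => 2 * w j + 1) (seq 1 D)))%nat).
Proof.
  rewrite <- profile_half_length. apply card_nonneg_values.
  - unfold profile_region. simpl. lia.
  - unfold profile_region. intros m n. rewrite !Z.abs_opp. auto.
  - apply profile_half_nodup.
  - apply in_profile_half.
Qed.

End Profile.

Lemma list_sum_seq_S (g : nat -> nat) (D : nat) :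
  list_sum (map g (seq 1 (S D))) = (list_sum (map g (seq 1 D)) + g (S D))%nat.
Proof. rewrite seq_S, map_app, list_sum_app. simpl. lia. Qed.

Lemma diamond_row_sum (d D : nat) : (D <= d)%nat ->
  list_sum (map (fun j => 2 * (d - j) + 1) (seq 1 D))%nat = (2 * d * D - D * D)%nat.
Proof.
  induction D as [|D IH]; intro HD; [simpl; lia|].
  rewrite list_sum_seq_S, IH by lia. nia.
Qed.

Lemma box_row_sum (d1 D : nat) :
  list_sum (map (fun _ => 2 * d1 + 1) (seq 1 D))%nat = (D * (2 * d1 + 1))%nat.
Proof. induction D as [|D IH]; [simpl; lia|]. rewrite list_sum_seq_S, IH. lia. Qed.

Lemma diamond_card (d : nat) :
  card_is (fun x => exists m n, x = V m n /\ 0 <= x /\ (Z.abs m + Z.abs n <= Z.of_nat d)%Z)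
    (d * d + d + 1)%nat.
Proof.
  pose proof (profile_card (fun j => d - j)%nat d) as Hcard.
  rewrite diamond_row_sum in Hcard by lia.
  replace (d * d + d + 1)%nat with (S (d - 0 + (2 * d * d - d * d)))%nat by lia.
  apply (card_is_ext _ _ _ Hcard). intro x. unfold profile_region.
  split; intros [m [n [Hx [Hpos Hreg]]]]; exists m, n; repeat split; auto; lia.
Qed.

Lemma box_card (d1 d2 : nat) :
  card_is (fun x => exists m n, x = V m n /\ 0 <= x /\
             (Z.abs m <= Z.of_nat d1)%Z /\ (Z.abs n <= Z.of_nat d2)%Z)
    (2 * d1 * d2 + d1 + d2 + 1)%nat.
Proof.
  pose proof (profile_card (fun _ => d1) d2) as Hcard. cbv beta in Hcard.
  rewrite box_row_sum in Hcard.
  replace (2 * d1 * d2 + d1 + d2 + 1)%nat with (S (d1 + d2 * (2 * d1 + 1)))%nat by lia.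
  apply (card_is_ext _ _ _ Hcard). intro x. unfold profile_region.
  split; intros [m [n [Hx [Hpos Hreg]]]]; exists m, n; repeat split; auto; lia.
Qed.

Theorem mainTheorem14 (f : Z -> Z)
  (hf0 : f 0%Z = 1%Z) (hf1 : f 1%Z = 1%Z)
  (hfrec : forall i : Z, f (i + 2)%Z = (f (i + 1)%Z + f i)%Z)
  (d d1 d2 : nat) :
  (forall x : R, E_single f d x <->
     exists m n : Z, x = IZR m + IZR n * / gamma /\ 0 <= x /\
       (Z.abs m + Z.abs n <= Z.of_nat d)%Z) /\
  (forall x : R, E_pair f d1 d2 x <->
     exists m n : Z, x = IZR m + IZR n * / gamma /\ 0 <= x /\
       (Z.abs m <= Z.of_nat d1)%Z /\ (Z.abs n <= Z.of_nat d2)%Z) /\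
  card_is (E_single f d) (d * d + d + 1)%nat /\
  card_is (E_pair f d1 d2) (2 * d1 * d2 + d1 + d2 + 1)%nat.
Proof.
  pose proof (E_single_char f hf0 hf1 hfrec d) as Hsingle.
  pose proof (E_pair_char f hf0 hf1 hfrec d1 d2) as Hpair.
  split; [exact Hsingle|]. split; [exact Hpair|]. split.
  - apply (card_is_ext _ _ _ (diamond_card d)). intro x. symmetry. apply Hsingle.
  - apply (card_is_ext _ _ _ (box_card d1 d2)). intro x. symmetry. apply Hpair.
Qed.
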